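(* Let $\omega\in\mathbb C\setminus\{0\}$ be fixed. There is exactly one pair of series $\mathsf W(x)\in\mathbb C[x][[t]]$ and $\mathsf H(x,y)\in\mathbb C[x,y][[t]]$ satisfying \[ \mathsf W(x)=x^2t\,\mathsf W(x)^2+\omega x t\,\mathsf H(x,0)+\omega^{-1}xt\,\mathsf H(0,x)+1 \] and \[ \mathsf H(x,y)=\mathsf W(x)\mathsf W(y)+\frac{\omega^{-1}}{y}\big(\mathsf H(x,y)-\mathsf H(x,0)\big)+\frac{\omega}{x}\big(\mathsf H(x,y)-\mathsf H(0,y)\big). \]
   Context: Here $\mathbb C[x][[t]]$ denotes formal power series in $t$ whose coefficients are polynomials in $x$ (similarly for $\mathbb C[x,y][[t]]$). The expressions $(\mathsf H(x,y)-\mathsf H(x,0))/y$ and $(\mathsf H(x,y)-\mathsf H(0,y))/x$ are again in $\mathbb C[x,y][[t]]$. *)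

From HB Require Import structures.
From mathcomp Require Import all_boot all_order all_algebra.
From mathcomp Require Import complex.
From mathcomp Require Import Rstruct.
Set Implicit Arguments. Unset Strict Implicit. Unset Printing Implicit Defensive.
Import Order.TTheory GRing.Theory Num.Theory.
Local Open Scope ring_scope.

Notation C := (complex Rdefinitions.R).

(* A formal power series in t with coefficients in A is represented by its
   coefficient sequence: f n = [t^n] f.
   C[x][[t]]   ~ nat -> {poly C}              (variable x)
   C[x,y][[t]] ~ nat -> {poly {poly C}}       (inner variable x, outer variable y) *)
Definition pseries (A : Type) := nat -> A.

Definition smul (A : pzRingType) (f g : pseries A) : pseries A :=
  fun n => \sum_(i < n.+1) f i * g (n - i)%N.

Definition tmul (A : pzRingType) (f : pseries A) : pseries A :=
  fun n => if n is m.+1 then f m else 0.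

Definition sone (A : pzRingType) : pseries A :=
  fun n => if n is 0 then 1 else 0.

Definition at_y0 (P : {poly {poly C}}) : {poly C} := P`_0.
Definition at_x0 (P : {poly {poly C}}) : {poly C} := map_poly (fun p => p.[0]) P.
Definition in_x (p : {poly C}) : {poly {poly C}} := p%:P.
Definition in_y (p : {poly C}) : {poly {poly C}} := map_poly polyC p.
Definition divy_diff (P : {poly {poly C}}) : {poly {poly C}} :=
  (P - in_x (at_y0 P)) %/ 'X.
Definition divx_diff (P : {poly {poly C}}) : {poly {poly C}} :=
  map_poly (fun p : {poly C} => p %/ 'X) (P - in_y (at_x0 P)).
Definition cst2 (c : C) : {poly {poly C}} := (c%:P)%:P.

Definition eqW (w : C) (W : pseries {poly C}) (H : pseries {poly {poly C}}) : Prop :=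
  forall n,
    W n = tmul (fun m => 'X^2 * smul W W m) n
          + tmul (fun m => w%:P * 'X * at_y0 (H m)) n
          + tmul (fun m => (w^-1)%:P * 'X * at_x0 (H m)) n
          + sone {poly C} n.

Definition eqH (w : C) (W : pseries {poly C}) (H : pseries {poly {poly C}}) : Prop :=
  forall n,
    H n = smul (fun i => in_x (W i)) (fun j => in_y (W j)) n
          + cst2 (w^-1) * divy_diff (H n)
          + cst2 w * divx_diff (H n).

From HB Require Import structures.
From mathcomp Require Import all_boot all_order all_algebra.
From mathcomp Require Import complex Rstruct.
From Stdlib Require Import FunctionalExtensionality.
Set Implicit Arguments. Unset Strict Implicit. Unset Printing Implicit Defensive.
Import GRing.Theory.
Local Open Scope ring_scope.

(* Write T P := w^-1 (P(x,y) - P(x,0))/y + w (P(x,y) - P(0,y))/x on C[x,y].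
   The coefficient of x^i y^j in T P only involves coefficients of total degree
   i + j + 1 of P, so T strictly lowers the total degree and is nilpotent on
   every polynomial.  Hence, for every S, the linear equation H = S + T H has
   the unique solution H = sum_k T^k S (section LocallyNilpotentFixpoint,
   stated for any additive locally nilpotent map).
   Extracting [t^n] from the equations, W_n is given by W_m, H_m for m < n
   (every term of the first right-hand side except 1 carries a factor t), and
   then H_n is the solution of H_n = [t^n] W(x)W(y) + T H_n.  So the system is
   equivalent to a recursion in which the n-th coefficient pair depends only on
   the lower ones (system_iff_recursion), and such a recursion has exactly one
   solution (section CausalRecursion). *)

Section LocallyNilpotentFixpoint.
Variables (V : zmodType) (T : {additive V -> V}) (deg : V -> nat).
Hypothesis T_nilpotent : forall v, iter (deg v) T v = 0.

Definition fixsol (s : V) : V := \sum_(k < deg s) iter k T s.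

Lemma fixsol_eq s : fixsol s = s + T (fixsol s).
Proof.
have sum_succ : \sum_(k < (deg s).+1) iter k T s = s + T (fixsol s).
  by rewrite big_ord_recl raddf_sum.
by rewrite -sum_succ big_ord_recr /= T_nilpotent addr0.
Qed.

(* A difference d of two solutions satisfies d = T d = T^k d for all k. *)
Lemma fixsol_unique s h : h = s + T h -> h = fixsol s.
Proof.
move=> eq_h; apply/eqP; rewrite -subr_eq0; apply/eqP.
set d := h - fixsol s.
have d_fixed : T d = d.
  by rewrite raddfB /d {2}eq_h {2}(fixsol_eq s) opprD addrACA subrr add0r.
have d_iter k : iter k T d = d by elim: k => //= k ->.
by rewrite -(d_iter (deg d)) T_nilpotent.
Qed.
End LocallyNilpotentFixpoint.

Section CausalRecursion.
Variables (A : Type) (a0 : A) (step : nat -> (nat -> A) -> A).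
Hypothesis step_causal :
  forall n f g, (forall m, (m < n)%N -> f m = g m) -> step n f = step n g.

(* approx k is correct on all indices below k. *)
Fixpoint approx (k : nat) : nat -> A :=
  if k is k.+1 then fun n => step n (approx k) else fun _ => a0.

Lemma approx_stable k k' n : (n < k)%N -> (k <= k')%N -> approx k n = approx k' n.
Proof.
elim: k k' n => [//|k IHk] [//|k'] n lt_n_k le_k_k' /=.
by apply: step_causal => m lt_m_n; apply: IHk (leq_trans lt_m_n _) le_k_k'.
Qed.

Definition recfix (n : nat) : A := approx n.+1 n.

Lemma recfix_eq n : recfix n = step n recfix.
Proof.
by apply: step_causal => m lt_m_n; exact: esym (approx_stable (ltnSn m) lt_m_n).
Qed.

Lemma recfix_unique g : (forall n, g n = step n g) -> forall n, g n = recfix n.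
Proof.
move=> g_eq; elim/ltn_ind => n IHn.
by rewrite g_eq recfix_eq; apply: step_causal.
Qed.
End CausalRecursion.

Lemma coef_divX (R : idomainType) (p : {poly R}) i : (p %/ 'X)`_i = p`_i.+1.
Proof. by rewrite -(expr1 'X) -Pdiv.IdomainMonic.drop_poly_divp coef_drop_poly addn1. Qed.

Definition coef2 (R : nzRingType) (P : {poly {poly R}}) (i j : nat) : R := (P`_j)`_i.

Lemma coef2_inj (R : nzRingType) (P Q : {poly {poly R}}) :
  (forall i j, coef2 P i j = coef2 Q i j) -> P = Q.
Proof. by move=> eqPQ; apply/polyP => j; apply/polyP => i; apply: eqPQ. Qed.

Lemma coef2B (R : nzRingType) (P Q : {poly {poly R}}) i j :
  coef2 (P - Q) i j = coef2 P i j - coef2 Q i j.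
Proof. by rewrite /coef2 !coefB. Qed.

Lemma coef2_divy P i j : coef2 (divy_diff P) i j = coef2 P i j.+1.
Proof. by rewrite /coef2 /divy_diff coef_divX coefB /in_x coefC /= subr0. Qed.

Lemma coef2_divx P i j : coef2 (divx_diff P) i j = coef2 P i.+1 j.
Proof.
rewrite /coef2 /divx_diff coef_map_id0 ?div0p // coef_divX coefB.
by rewrite /in_y /at_x0 !coef_map_id0 ?horner0 // coefB coefC /= subr0.
Qed.

Definition vanishes_from (R : nzRingType) (k : nat) (P : {poly {poly R}}) : Prop :=
  forall i j, (k <= i + j)%N -> coef2 P i j = 0.

Definition total_bound (R : nzRingType) (P : {poly {poly R}}) : nat :=
  (size P + \max_(j < size P) size (P`_j)%R)%N.

Lemma vanishes_from_total_bound (R : nzRingType) (P : {poly {poly R}}) :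
  vanishes_from (total_bound P) P.
Proof.
move=> i j; rewrite /total_bound /coef2 => big_ij.
have [lt_j_P | le_P_j] := ltnP j (size P); last by rewrite (nth_default _ le_P_j) coef0.
apply: nth_default.
have le_max := @leq_bigmax _ (fun j0 : 'I_(size P) => size (P`_j0)%R) (Ordinal lt_j_P).
apply: leq_trans le_max _.
by rewrite -(leq_add2r j); apply: leq_trans _ big_ij; rewrite addnC leq_add2r ltnW.
Qed.

Lemma vanishes_from0 (R : nzRingType) (P : {poly {poly R}}) :
  vanishes_from 0 P -> P = 0.
Proof. by move=> P0; apply: coef2_inj => i j; rewrite P0 // /coef2 !coef0. Qed.

Section DegreeLowering.
Variable w : C.

Definition shiftT (P : {poly {poly C}}) : {poly {poly C}} :=
  cst2 (w^-1) * divy_diff P + cst2 w * divx_diff P.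

Lemma coef2_shiftT P i j :
  coef2 (shiftT P) i j = w^-1 * coef2 P i j.+1 + w * coef2 P i.+1 j.
Proof.
rewrite /shiftT /coef2 coefD /cst2 !coefCM coefD !coefCM -!/(coef2 _ _ _).
by rewrite coef2_divy coef2_divx.
Qed.

Lemma shiftT_is_zmod_morphism : zmod_morphism shiftT.
Proof.
move=> P Q; apply: coef2_inj => i j.
by rewrite coef2B !coef2_shiftT !coef2B !mulrBr opprD addrACA.
Qed.

HB.instance Definition _ :=
  GRing.isZmodMorphism.Build _ _ shiftT shiftT_is_zmod_morphism.

Lemma vanishes_from_shiftT k P : vanishes_from k.+1 P -> vanishes_from k (shiftT P).
Proof.
by move=> Pk i j le_k_ij; rewrite coef2_shiftT !Pk ?mulr0 ?addr0 // ?addnS ?addSn ltnS.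
Qed.

Lemma vanishes_from_iter k m P :
  vanishes_from (k + m) P -> vanishes_from k (iter m shiftT P).
Proof.
elim: m k => [|m IHm] k Pkm; first by rewrite addn0 in Pkm.
by apply/vanishes_from_shiftT/IHm; rewrite addSnnS.
Qed.

Lemma shiftT_nilpotent P : iter (total_bound P) shiftT P = 0.
Proof. exact/vanishes_from0/vanishes_from_iter/vanishes_from_total_bound. Qed.
End DegreeLowering.

Section OrderByOrder.
Variable w : C.

Notation Coeff := ({poly C} * {poly {poly C}})%type.

Definition rhsW (W : pseries {poly C}) (H : pseries {poly {poly C}}) (n : nat) :
    {poly C} :=
  tmul (fun m => 'X^2 * smul W W m) n
  + tmul (fun m => w%:P * 'X * at_y0 (H m)) n
  + tmul (fun m => (w^-1)%:P * 'X * at_x0 (H m)) n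
  + sone {poly C} n.

Definition prodWW (W : pseries {poly C}) (n : nat) : {poly {poly C}} :=
  smul (fun i => in_x (W i)) (fun j => in_y (W j)) n.

(* W with its n-th coefficient replaced by p; coeff_step uses it to feed the
   freshly computed W_n into [t^n] W(x)W(y). *)
Definition override (W : pseries {poly C}) (n : nat) (p : {poly C}) : pseries {poly C} :=
  fun i => if i == n then p else W i.

Definition coeff_step (n : nat) (F : nat -> Coeff) : Coeff :=
  let W := fun m => (F m).1 in
  let Wn := rhsW W (fun m => (F m).2) n in
  (Wn, fixsol (shiftT w) (@total_bound C) (prodWW (override W n Wn) n)).

Lemma rhsW_causal n F G : (forall m, (m < n)%N -> F m = G m) ->
  rhsW (fun m => (F m).1) (fun m => (F m).2) n
  = rhsW (fun m => (G m).1) (fun m => (G m).2) n.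
Proof.
case: n => [//|n] eqFG; rewrite /rhsW /tmul /smul !eqFG //.
congr (_ * _ + _ + _ + _); apply: eq_bigr => i _.
by rewrite !eqFG // ltnS leq_subr.
Qed.

Lemma override_causal W W' n p i : (forall m, (m < n)%N -> W m = W' m) ->
  (i <= n)%N -> override W n p i = override W' n p i.
Proof.
move=> eqWW' le_i_n; rewrite /override; case: eqVneq => // ne_in.
by rewrite eqWW' // ltn_neqAle ne_in.
Qed.

Lemma coeff_step_causal n F G :
  (forall m, (m < n)%N -> F m = G m) -> coeff_step n F = coeff_step n G.
Proof.
move=> eqFG; rewrite /coeff_step (rhsW_causal eqFG); congr (_, fixsol _ _ _).
have eqW m : (m < n)%N -> (F m).1 = (G m).1 by move=> lt_m_n; rewrite eqFG.
apply: eq_bigr => i _; have le_i_n : (i <= n)%N by rewrite -ltnS.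
by rewrite !(override_causal _ eqW) // leq_subr.
Qed.

Lemma system_iff_recursion W H :
  eqW w W H /\ eqH w W H <-> forall n, (W n, H n) = coeff_step n (fun m => (W m, H m)).
Proof.
have override_id n : W n = rhsW W H n -> override W n (rhsW W H n) = W.
  move=> eqWn; apply: functional_extensionality => i.
  by rewrite /override; case: eqP => // ->.
split=> [[eq_W eq_H] n | rec].
  have eq_Wn : W n = rhsW W H n := eq_W n.
  rewrite /coeff_step (override_id n eq_Wn) -eq_Wn; congr (_, _).
  by apply: fixsol_unique; [exact: shiftT_nilpotent | rewrite addrA; exact: eq_H].
have eq_W : eqW w W H by move=> n; case: (rec n).
split=> // n; case: (rec n) => _; rewrite (override_id n (eq_W n)) => ->.
by rewrite -addrA; apply: fixsol_eq; exact: shiftT_nilpotent.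
Qed.
End OrderByOrder.

Theorem mainTheorem3 (w : C) (hw : w != 0) :
  exists! WH : pseries {poly C} * pseries {poly {poly C}},
    eqW w WH.1 WH.2 /\ eqH w WH.1 WH.2.
Proof.
pose F := recfix (0, 0) (coeff_step w).
have F_eq n : F n = coeff_step w n F := recfix_eq (0, 0) (@coeff_step_causal w) n.
exists (fun n => (F n).1, fun n => (F n).2); split.
  apply/system_iff_recursion => n; rewrite -surjective_pairing F_eq.
  by apply: coeff_step_causal => m _; exact: surjective_pairing.
move=> [W H] /system_iff_recursion /(recfix_unique (0, 0) (@coeff_step_causal w)) eq_WH.
by congr (_, _); apply: functional_extensionality => n; rewrite /F -eq_WH.
Qed.
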